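(* Let $(B,k)$ be an instance of the orthogonal buttons and scissors problem. If $B$ has more than $k$ heavy rows or more than $k$ heavy columns, then $(B,k)$ is a no-instance.
   Context: An instance of the orthogonal buttons and scissors problem is a pair $(B,k)$ where $B$ is an $n\times m$ matrix with nonnegative integer entries and $k$ is a nonnegative integer. Cell $(i,j)$ contains a button of color $c$ if $B[i,j]=c>0$, and no button if $B[i,j]=0$. A cut is either a horizontal cut (a sequence of consecutive cells in one row) or a vertical cut (a sequence of consecutive cells in one column). Cuts are applied one after another; a cut is valid at the moment it is applied if, among the buttons still present, its first and last cells contain buttons and all buttons in its cells have the same color. Applying a cut deletes all buttons in its cells. $(B,k)$ is a yes-instance if some sequence of at most $k$ cuts, each valid when applied, removes all buttons of $B$, and a no-instance otherwise. A row or column of $B$ is heavy if it contains at least $k+1$ buttons. *)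

From mathcomp Require Import all_boot all_order all_algebra.
Set Implicit Arguments. Unset Strict Implicit. Unset Printing Implicit Defensive.

(* A board: an n x m matrix of natural numbers; 0 = no button, c > 0 = button of color c. *)
Definition board (n m : nat) := 'M[nat]_(n, m).

Inductive cut (n m : nat) : Type :=
| HCut (i : 'I_n) (j1 j2 : 'I_m)
| VCut (j : 'I_m) (i1 i2 : 'I_n).

Definition cut_cells n m (c : cut n m) : {set 'I_n * 'I_m} :=
  match c with
  | HCut i j1 j2 => [set p : 'I_n * 'I_m | (p.1 == i) && (j1 <= p.2 <= j2)]
  | VCut j i1 i2 => [set p : 'I_n * 'I_m | (p.2 == j) && (i1 <= p.1 <= i2)]
  end.

Definition cut_first n m (c : cut n m) : 'I_n * 'I_m :=
  match c with HCut i j1 _ => (i, j1) | VCut j i1 _ => (i1, j) end.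
Definition cut_last n m (c : cut n m) : 'I_n * 'I_m :=
  match c with HCut i _ j2 => (i, j2) | VCut j _ i2 => (i2, j) end.

Definition cut_ordered n m (c : cut n m) : bool :=
  match c with HCut _ j1 j2 => j1 <= j2 | VCut _ i1 i2 => i1 <= i2 end.

Definition buttons n m (B : board n m) : {set 'I_n * 'I_m} :=
  [set p : 'I_n * 'I_m | 0 < B p.1 p.2].

(* Validity of a cut w.r.t. the set S of cells whose buttons are still present:
   first and last cells contain (present) buttons, and all present buttons in
   the cut have the same color. *)
Definition valid_cut n m (B : board n m) (S : {set 'I_n * 'I_m}) (c : cut n m) : Prop :=
  [/\ cut_ordered c, cut_first c \in S, cut_last c \in S &
      exists col, forall p, p \in S -> p \in cut_cells c -> B p.1 p.2 = col].

Definition apply_cut n m (S : {set 'I_n * 'I_m}) (c : cut n m) : {set 'I_n * 'I_m} :=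
  S :\: cut_cells c.

Fixpoint valid_seq n m (B : board n m) (S : {set 'I_n * 'I_m}) (cs : seq (cut n m))
  : Prop :=
  match cs with
  | [::] => True
  | c :: cs' => valid_cut B S c /\ valid_seq B (apply_cut S c) cs'
  end.

Definition final_set n m (S : {set 'I_n * 'I_m}) (cs : seq (cut n m)) :=
  foldl (@apply_cut n m) S cs.

Definition yes_instance n m (B : board n m) (k : nat) : Prop :=
  exists cs : seq (cut n m),
    [/\ size cs <= k, valid_seq B (buttons B) cs & final_set (buttons B) cs = set0].

Definition no_instance n m (B : board n m) (k : nat) : Prop := ~ yes_instance B k.

Definition heavy_row n m (B : board n m) (k : nat) (i : 'I_n) : bool :=
  k < #|[set j : 'I_m | 0 < B i j]|.
Definition heavy_col n m (B : board n m) (k : nat) (j : 'I_m) : bool :=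
  k < #|[set i : 'I_n | 0 < B i j]|.

From mathcomp Require Import all_boot all_order all_algebra.
Set Implicit Arguments. Unset Strict Implicit. Unset Printing Implicit Defensive.

(* A heavy row outside R would have its
   more than k buttons in columns of C, so every heavy row is in R; hence there
   are at most k heavy rows, and symmetrically (transposing) at most k heavy
   columns. *)

Section Cuts.
Variables n m : nat.

Definition cut_row (c : cut n m) : option 'I_n :=
  if c is HCut i _ _ then Some i else None.
Definition cut_col (c : cut n m) : option 'I_m :=
  if c is VCut j _ _ then Some j else None.

Definition cut_rows (cs : seq (cut n m)) : {set 'I_n} := [set i in pmap cut_row cs].
Definition cut_cols (cs : seq (cut n m)) : {set 'I_m} := [set j in pmap cut_col cs].

Definition line_cells (R : {set 'I_n}) (C : {set 'I_m}) : {set 'I_n * 'I_m} :=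
  [set p | (p.1 \in R) || (p.2 \in C)].

Lemma final_setE (S : {set 'I_n * 'I_m}) cs :
  final_set S cs = S :\: \bigcup_(c <- cs) cut_cells c.
Proof.
elim: cs S => [|c cs IH] S; first by rewrite big_nil setD0.
by rewrite big_cons -setDDl -IH.
Qed.

Lemma card_cut_rows_cols cs : #|cut_rows cs| + #|cut_cols cs| <= size cs.
Proof.
have card_pmap (T : finType) (f : cut n m -> option T) :
    #|[set x in pmap f cs]| <= size (pmap f cs).
  by rewrite cardsE card_size.
have horizontal_or_vertical : predC (fun c => cut_row c) =1 (fun c => cut_col c).
  by case.
apply: leq_trans (leq_add (card_pmap _ cut_row) (card_pmap _ cut_col)) _.
by rewrite !size_pmap -(eq_count horizontal_or_vertical) count_predC.
Qed.

Lemma bigcup_cut_cells_sub cs :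
  \bigcup_(c <- cs) cut_cells c \subset line_cells (cut_rows cs) (cut_cols cs).
Proof.
elim: cs => [|c cs IH]; first by rewrite big_nil sub0set.
rewrite big_cons subUset; apply/andP; split.
  apply/subsetP => p; case: c => [i j1 j2|j i1 i2];
    by rewrite !inE /= => /andP[/eqP-> _]; rewrite ?inE eqxx ?orbT.
apply: subset_trans IH _; apply/subsetP => p; rewrite !inE.
by case: c => [i _ _|j _ _] /=; rewrite !inE => /orP[->|->]; rewrite ?orbT.
Qed.

End Cuts.

Lemma yes_instance_line_cover n m (B : board n m) k : yes_instance B k ->
  exists (R : {set 'I_n}) (C : {set 'I_m}),
    #|R| + #|C| <= k /\ buttons B \subset line_cells R C.
Proof.
move=> [cs [size_cs _ cleared]]; exists (cut_rows cs), (cut_cols cs); split.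
  exact: leq_trans (card_cut_rows_cols cs) size_cs.
by apply: subset_trans (bigcup_cut_cells_sub cs); rewrite -setD_eq0 -final_setE cleared.
Qed.

Section HeavyLines.
Variables (n m : nat) (B : board n m) (k : nat).

Lemma card_heavy_rows_le (R : {set 'I_n}) (C : {set 'I_m}) :
  buttons B \subset line_cells R C -> #|R| <= k -> #|C| <= k ->
  #|[set i | heavy_row B k i]| <= k.
Proof.
move=> cover card_R card_C.
suff /subset_leq_card heavy_R : [set i | heavy_row B k i] \subset R.
  exact: leq_trans heavy_R card_R.
apply/subsetP => i; rewrite inE /heavy_row; apply: contraLR => iNR.
suff /subset_leq_card row_C : [set j | 0 < B i j] \subset C.
  by rewrite -leqNgt (leq_trans row_C card_C).
apply/subsetP => j; rewrite inE => Bij.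
by have := subsetP cover (i, j); rewrite !inE /= (negbTE iNR); apply.
Qed.

Lemma line_cover_tr (R : {set 'I_n}) (C : {set 'I_m}) :
  buttons B \subset line_cells R C -> buttons (trmx B) \subset line_cells C R.
Proof.
move=> cover; apply/subsetP => -[j i]; rewrite !inE mxE /= orbC => Bij.
by have := subsetP cover (i, j); rewrite !inE; apply.
Qed.

Lemma heavy_col_tr j : heavy_col B k j = heavy_row (trmx B) k j.
Proof.
by rewrite /heavy_row /heavy_col; congr (_ < _); apply: eq_card => i; rewrite !inE mxE.
Qed.

End HeavyLines.

Lemma card_heavy_cols_le n m (B : board n m) k (R : {set 'I_n}) (C : {set 'I_m}) :
  buttons B \subset line_cells R C -> #|R| <= k -> #|C| <= k ->
  #|[set j | heavy_col B k j]| <= k.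
Proof.
move=> /line_cover_tr cover card_R card_C.
have -> : [set j | heavy_col B k j] = [set j | heavy_row (trmx B) k j].
  by apply/setP => j; rewrite !inE heavy_col_tr.
exact: card_heavy_rows_le cover card_C card_R.
Qed.

Theorem mainTheorem2 (n m : nat) (B : 'M[nat]_(n, m)) (k : nat) :
  (k < #|[set i : 'I_n | heavy_row B k i]| \/ k < #|[set j : 'I_m | heavy_col B k j]|) ->
  no_instance B k.
Proof.
move=> heavy /yes_instance_line_cover [R [C [card_RC cover]]].
have card_R : #|R| <= k := leq_trans (leq_addr _ _) card_RC.
have card_C : #|C| <= k := leq_trans (leq_addl _ _) card_RC.
case: heavy; apply/negP; rewrite -leqNgt.
  exact: card_heavy_rows_le cover card_R card_C.
exact: card_heavy_cols_le cover card_R card_C.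
Qed.
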